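(* Let $T$ be a non-abelian finite simple group, $r,s\in\pi(T)$, and let $G$ be a finite group with a solvable normal subgroup $N$ of order coprime to $r$ such that $G/N\cong E$ for a perfect central extension $E$ of $T$. Suppose that in every section of $G$ having $T$ as a section, no element of order $r$ or of order $s$ is central, and that for every prime $p\in\pi(N)\setminus\{s\}$ some element of $G$ of order $r$ acts trivially by conjugation on some Sylow $p$-subgroup of $N$. Then there exists a subgroup $H\le G$ with a normal $s$-subgroup $S$ such that $H/S$ is a perfect central extension of $T$.
   Context: All groups are finite. A perfect central extension of $T$ is a perfect group $E$ with $E/Z(E)\cong T$. A section of a group is a quotient of a subgroup. $\pi(N)$ is the set of prime divisors of $|N|$. *)

From mathcomp Require Import all_boot all_fingroup all_solvable.
Set Implicit Arguments. Unset Strict Implicit. Unset Printing Implicit Defensive.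
Local Open Scope group_scope.

Definition perfect_central_ext (eT tT : finGroupType) (E : {group eT}) (T : {group tT}) : bool :=
  ([~: E, E] == E) && ((E / 'Z(E))%G \isog T).

Definition has_section (xT tT : finGroupType) (X : {set xT}) (T : {group tT}) : Prop :=
  exists (A B : {group xT}), [/\ A \subset X, B <| A & (A / B)%G \isog T].

From mathcomp Require Import all_boot all_fingroup all_solvable.
Set Implicit Arguments. Unset Strict Implicit. Unset Printing Implicit Defensive.
Local Open Scope group_scope.

(* Take H minimal among the subgroups of G with NH = G, and K = H :&: N. By
   minimality H is perfect and, through the Frattini argument, normalises
   every Sylow subgroup of K. For p <> s, an element of order r centralising
   a Sylow p-subgroup of N is non-central modulo N, so the centraliser of a
   Sylow p-subgroup P of K covers G/N; as N is solvable and H perfect, H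
   centralises P. Hence K/S is central in H/S for the Sylow s-subgroup S of
   K, and the perfect group H/S, with (H/S)/(K/S) = G/N, is a perfect central
   extension of T. *)

Lemma isog_center_quotient (aT rT : finGroupType) (X : {group aT}) (Y : {group rT}) :
  X \isog Y -> (X / 'Z(X))%G \isog (Y / 'Z(Y))%G.
Proof.
case/isogP=> f injf fX.
have fZ : (f @* 'Z(X))%G = 'Z(Y)%G by apply: val_inj; rewrite /= injm_center // fX.
rewrite -fZ; apply/isogP; exists (quotm_morphism f (center_normal X)).
  exact: injm_quotm.
by rewrite /= morphim_quotm fX.
Qed.

Lemma perfect_center_quotient (gT : finGroupType) (X A : {group gT}) :
  [~: X, X] = X -> A <| X -> A \subset 'Z(X) -> 'Z(X / A) = 'Z(X) / A.
Proof.
move=> pX nsAX sAZ; have nAX := normal_norm nsAX.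
apply/eqP; rewrite eqEsubset; apply/andP; split; last first.
  rewrite subsetI quotientS ?center_sub //=.
  by apply: quotient_cents; rewrite subIset // subxx orbT.
apply/subsetP=> _ /centerP[/morphimP[x nAx Xx ->] cxX].
have sxX : <[x]> \subset X by rewrite cycle_subG.
have sxXA : [~: <[x]>, X] \subset A.
  rewrite -quotient_sub1; last by rewrite (subset_trans _ nAX) // commg_subr (subset_trans sxX) ?normG.
  rewrite quotientR ?cycle_subG // quotient_cycle //.
  by apply/trivgP/commG1P; rewrite cycle_subG; apply/centP.
have cAX : A \subset 'C(X) by rewrite (subset_trans sAZ) // subIset // subxx orbT.
(* Three subgroups lemma: [x, X, X] = [X, x, X] = 1 forces [X, X, x] = [X, x] = 1. *)
have cxXX : [~: <[x]>, X, X] = 1 by apply/commG1P; rewrite (subset_trans sxXA).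
have cXxX : [~: X, <[x]>, X] = 1 by rewrite (commGC X).
have := three_subgroup cXxX cxXX; rewrite pX => /commG1P cXx.
apply: mem_quotient; apply/centerP; split=> // y Xy.
by apply/centP: y Xy; rewrite -cycle_subG centsC.
Qed.

Lemma perfect_central_ext_section (eT tT : finGroupType) (E : {group eT}) (T : {group tT}) :
  perfect_central_ext E T -> has_section E T.
Proof. by case/andP=> _ iET; exists E, 'Z(E)%G; rewrite center_normal. Qed.

Lemma perfect_central_ext_cover (gT eT tT : finGroupType)
    (X A : {group gT}) (E : {group eT}) (T : {group tT}) :
  [~: X, X] = X -> A <| X -> A \subset 'Z(X) -> (X / A)%G \isog E ->
  perfect_central_ext E T -> perfect_central_ext X T.
Proof.
move=> pX nsAX sAZ iXA_E /andP[_ iET]; rewrite /perfect_central_ext pX eqxx /=.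
have ZXA : 'Z(X / A)%G = ('Z(X) / A)%G by apply: val_inj; apply: perfect_center_quotient.
have := isog_center_quotient iXA_E; rewrite ZXA => iZ.
apply: isog_trans (isog_trans iZ iET).
by rewrite isog_sym third_isog // center_normal.
Qed.

Lemma perfect_central_ext_normal (eT tT : finGroupType) (E Y : {group eT}) (T : {group tT}) :
  simple T -> perfect_central_ext E T -> Y <| E -> Y \subset 'Z(E) \/ Y :=: E.
Proof.
move=> simT /andP[/eqP pE iET] nsYE; have [sYE nYE] := andP nsYE.
have nZE : E \subset 'N('Z(E)) by apply/normal_norm/center_normal.
have simEZ : simple (E / 'Z(E))%G by rewrite (isog_simple iET).
case/simpleP: simEZ => _ /(_ (Y / 'Z(E))%G (quotient_normal _ nsYE)) [] /= YZ.
  by left; rewrite -quotient_sub1 ?(subset_trans sYE) // YZ //.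
right; apply/eqP; rewrite eqEsubset sYE /= -{1}pE -derg1 der1_min //.
have sEZY : E \subset 'Z(E) * Y by rewrite -quotientSK // YZ.
apply: abelianS (quotient_abelian Y (center_abelian E)).
by apply: subset_trans (quotientS Y sEZY) _; rewrite quotientMidr.
Qed.

Lemma order_coset_coprime (gT : finGroupType) (N : {group gT}) (x : gT) :
  x \in 'N(N) -> coprime #|N| #[x] -> #[coset N x] = #[x].
Proof.
move=> nNx coNx; rewrite /order -quotient_cycle //.
by rewrite -(card_isog (quotient_isog _ _)) ?cycle_subG // coprime_TIg.
Qed.

Lemma cent_Sylow_conj (gT : finGroupType) (p : nat) (N P P0 : {group gT}) (g : gT) :
  P0 \in 'Syl_p(N) -> g \in 'C(P0) -> P \subset N -> p.-group P ->
  exists2 x, x \in N & g ^ x \in 'C(P).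
Proof.
rewrite inE => sylP0 cgP0 sPN pP.
have [Q sylQ sPQ] := Sylow_superset sPN pP.
have [x Nx defQ] := Sylow_trans sylP0 sylQ.
by exists x; rewrite // (subsetP (centS sPQ)) // defQ centJ memJ_conjg.
Qed.

(* The normal subgroup C_G(P)N/N of G/N is not central, hence is all of G/N;
   then H/C_H(P) is a section of the solvable group N, so the perfect H
   centralises P. *)
Lemma perfect_supplement_cent (gT tT : finGroupType) (T : {group tT})
    (G N H P : {group gT}) (y : gT) :
  simple T -> perfect_central_ext (G / N)%G T -> N <| G -> solvable N ->
  H \subset G -> H / N = G / N -> [~: H, H] = H -> H \subset 'N(P) ->
  y \in 'C_G(P) -> coset N y \notin 'Z(G / N) -> H \subset 'C(P).
Proof.
move=> simT pceGN nsNG solN sHG eHN perH nPH Yy ncy; have nNG := normal_norm nsNG.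
set Y := 'C_G(P)%G; have nsYX : Y <| 'N_G(P) := subcent_normal G P.
have sHX : H \subset 'N_G(P) by rewrite subsetI sHG.
have nYH : H \subset 'N(Y) := subset_trans sHX (normal_norm nsYX).
have nsYN_GN : (Y / N)%G <| (G / N)%G.
  have eXN : 'N_G(P) / N = G / N.
    by apply/eqP; rewrite eqEsubset quotientS ?subsetIl //= -eHN quotientS.
  by rewrite /= -eXN quotient_normal.
have sGNY : G \subset N * Y.
  have [cYN | eYN] := perfect_central_ext_normal simT pceGN nsYN_GN.
    by case/negP: ncy; rewrite (subsetP cYN) ?mem_quotient.
  by rewrite -quotientSK //= eYN.
have sHYNY : H / Y \subset N / Y.
  by rewrite -(quotientMidr Y N) quotientS // (subset_trans sHG).
have : H / Y == 1.
  apply/negPn/negP => ntHY.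
  have := sol_der1_proper (quotient_sol Y solN) sHYNY ntHY.
  by rewrite derg1 -quotientR // perH properE subxx.
by rewrite -subG1 quotient_sub1 // => /subset_trans-> //; apply: subsetIr.
Qed.

Lemma quotient_sub_center_cent_Sylows (gT : finGroupType) (s : nat) (H K S : {group gT}) :
  K <| H -> s.-Sylow(K) S -> S <| H ->
  (forall p (P : {group gT}), p.-Sylow(K) P -> p != s -> H \subset 'C(P)) ->
  K / S \subset 'Z(H / S).
Proof.
move=> nsKH sylS nsSH cHP; have [sKH _] := andP nsKH; have [_ nSH] := andP nsSH.
have nsSK : S <| K by rewrite /normal (pHall_sub sylS) (subset_trans sKH).
set C := 'C_K(H)%G; have nSC : C \subset 'N(S) by rewrite (subset_trans _ nSH) ?subIset ?sKH.
have sK_SC : K \subset S <*> C.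
  rewrite -{1}(Sylow_gen K) gen_subG; apply/bigcupsP=> P /SylowP[p _ sylP].
  have [eps | nps] := eqVneq p s.
    rewrite eps in sylP; rewrite (subset_trans _ (joing_subl _ _)) //.
    by rewrite (sub_normal_Hall sylS nsSK (pHall_sub sylP)) (pHall_pgroup sylP).
  by rewrite (subset_trans _ (joing_subr _ _)) // subsetI (pHall_sub sylP) centsC (cHP p).
rewrite subsetI quotientS //= (subset_trans (quotientS S sK_SC)) // quotientYidl //.
by apply: quotient_cents; apply: subsetIr.
Qed.

Section MinimalSupplement.

Variables (gT : finGroupType) (G N H : {group gT}).
Hypotheses (nsNG : N <| G) (minH : [min H | (H \subset G) && (G \subset N * H)]).

Let sHG : H \subset G. Proof. by case/andP: (mingroupp minH). Qed.
Let sGNH : G \subset N * H. Proof. by case/andP: (mingroupp minH). Qed.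
Let nNH : H \subset 'N(N). Proof. exact: subset_trans sHG (normal_norm nsNG). Qed.

Lemma minimal_supplement_quotient : H / N = G / N.
Proof.
by apply/eqP; rewrite eqEsubset quotientS //= quotientSK ?normal_norm.
Qed.

Lemma minimal_supplement_isog : (H / (H :&: N))%G \isog (G / N)%G.
Proof. by rewrite /= -minimal_supplement_quotient setIC second_isog. Qed.

Lemma minimal_supplement_perfect : [~: G / N, G / N] = G / N -> [~: H, H] = H.
Proof.
move=> pGN; apply: (mingroupP minH).2; last exact: der1_subG.
rewrite (subset_trans (der1_subG _) sHG) /= -quotientSK ?normal_norm //.
by rewrite quotientR // minimal_supplement_quotient pGN.
Qed.

(* Frattini argument: H = (H :&: N) 'N_H(P), and 'N_H(P) still supplements N. *)
Lemma minimal_supplement_norm_Sylow p (P : {group gT}) :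
  p.-Sylow(H :&: N) P -> H \subset 'N(P).
Proof.
move=> sylP; have defH := Frattini_arg (normalGI sHG nsNG) sylP.
suff <- : 'N_H(P) = H :> {set gT} by apply: subsetIr.
apply: (mingroupP minH).2; last exact: subsetIl.
rewrite (subset_trans (subsetIl _ _) sHG) (subset_trans sGNH) //=.
by rewrite -{1}defH mulgA (mulGSid (subsetIr H N)).
Qed.

Lemma minimal_supplement_cent_Sylow (tT : finGroupType) (T : {group tT}) p (P : {group gT}) :
  simple T -> perfect_central_ext (G / N)%G T -> solvable N ->
  p.-Sylow(H :&: N) P ->
  (p \in \pi(#|N|) -> exists2 g, g \in G & coset N g \notin 'Z(G / N) /\
     exists2 P0 : {group gT}, P0 \in 'Syl_p(N) & g \in 'C(P0)) ->
  H \subset 'C(P).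
Proof.
move=> simT pceGN solN sylP centP; have [sPHN pP _] := and3P sylP.
have sPN : P \subset N := subset_trans sPHN (subsetIr H N).
have [-> | ntP] := eqVneq P 1%G; first by rewrite cents1.
have [pr_p p_dv_P _] := pgroup_pdiv pP ntP.
have [|g Gg [ncg [P0 sylP0 cgP0]]] := centP.
  by rewrite mem_primes pr_p cardG_gt0 (dvdn_trans p_dv_P) ?cardSg.
have [x Nx cgxP] := cent_Sylow_conj sylP0 cgP0 sPN pP.
have [sNG nNG] := andP nsNG.
have Ggx : g ^ x \in G by rewrite groupJ // (subsetP sNG).
apply: (perfect_supplement_cent (y := g ^ x) simT pceGN nsNG solN sHG).
- exact: minimal_supplement_quotient.
- exact: minimal_supplement_perfect (eqP (andP pceGN).1).
- exact: minimal_supplement_norm_Sylow sylP.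
- by rewrite inE Ggx cgxP.
- have nNg : g \in 'N(N) := subsetP nNG g Gg.
  have nNx : x \in 'N(N) := subsetP nNG x (subsetP sNG x Nx).
  by rewrite morphJ // (coset_id Nx : coset_morphism N x = 1) conjg1.
Qed.

End MinimalSupplement.

Theorem lemma1p17 (tT gT : finGroupType) (T : {group tT}) (r s : nat)
    (G N : {group gT}) :
  simple T -> ~~ abelian T ->
  r \in \pi(#|T|) -> s \in \pi(#|T|) ->
  N <| G -> solvable N -> coprime #|N| r ->
  perfect_central_ext (G / N)%G T ->
  (forall K L : {group gT}, K \subset G -> L <| K ->
     has_section (K / L) T ->
     forall x, x \in K / L -> (#[x] == r) || (#[x] == s) -> x \notin 'Z(K / L)) ->
  (forall p, p \in \pi(#|N|) -> p != s ->
     exists2 g, g \in G & #[g] = r /\ exists2 P : {group gT}, P \in 'Syl_p(N) & g \in 'C(P)) ->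
  exists H : {group gT}, H \subset G /\
    exists S : {group gT}, [/\ S <| H, s.-group S & perfect_central_ext (H / S)%G T].
Proof.
move=> simT _ _ _ nsNG solN coNr pceGN noncentral cent_Sylow.
have nNG := normal_norm nsNG.
have [H minH] : {H : {group gT} | [min H | (H \subset G) && (G \subset N * H)]}.
  by apply: ex_mingroup; exists G; rewrite subxx mulG_subr.
have [sHG _] := andP (mingroupp minH).
have perH := minimal_supplement_perfect nsNG minH (eqP (andP pceGN).1).
have cHP p (P : {group gT}) : p.-Sylow(H :&: N) P -> p != s -> H \subset 'C(P).
  move=> sylP nps; apply: (minimal_supplement_cent_Sylow nsNG minH simT pceGN solN sylP).
  move=> piNp; have [g Gg [og cgSyl]] := cent_Sylow p piNp nps.
  exists g => //; split=> //; apply: (noncentral G N) => //.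
  - exact: perfect_central_ext_section.
  - exact: mem_quotient.
  - by rewrite order_coset_coprime ?(subsetP nNG) // og ?eqxx.
have [S sylS] := Sylow_exists s (H :&: N).
have nsSH : S <| H.
  rewrite /normal (subset_trans (pHall_sub sylS) (subsetIl H N)).
  exact: (minimal_supplement_norm_Sylow nsNG minH sylS).
exists H; split=> //; exists S; split=> //; first exact: pHall_pgroup sylS.
have nsHN_H : H :&: N <| H := normalGI sHG nsNG.
apply: (perfect_central_ext_cover _ (quotient_normal S nsHN_H) _ _ pceGN).
- by rewrite /= -quotientR ?normal_norm // perH.
- exact: (quotient_sub_center_cent_Sylows nsHN_H sylS nsSH cHP).
- apply: isog_trans (third_isog (pHall_sub sylS) nsSH nsHN_H) _.
  exact: minimal_supplement_isog nsNG minH.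
Qed.
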